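(* Suppose $\mathcal X$ is convex and $x\mapsto\ell(x,i)$ is convex for each $i\in\Sigma$. Let $\mathbb Q\in\mathcal P$ and $\alpha>0$ satisfy $\sqrt{2\alpha}\le\min_{i\in\Sigma}\mathbb Q(i)\cdot\min_{i\in\Sigma}\min(\mathbb Q(i),1-\mathbb Q(i))$. Then $x\mapsto c(x,\mathbb Q)+\sqrt{2\alpha\,\mathrm{Var}_{\mathbb Q}(\ell(x,\xi))}$ is convex on $\mathcal X$. (In particular this applies with $\mathbb Q=\hat{\mathbb P}_T$ and $\alpha=a_T/T$.)
   Context: $\Sigma=\{1,\dots,d\}$ ($d\ge2$) finite, $\mathcal P$ the probability simplex; $\mathcal X\subset\mathbb R^n$ compact; $\ell:\mathcal X\times\Sigma\to\mathbb R$. $c(x,\mathbb Q)=\sum_i\ell(x,i)\mathbb Q(i)$ and $\mathrm{Var}_{\mathbb Q}(\ell(x,\xi))=\sum_i\mathbb Q(i)(\ell(x,i)-c(x,\mathbb Q))^2$. $\hat{\mathbb P}_T$ denotes the empirical distribution of $T$ observed samples and $(a_T)$ a positive sequence. *)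

From HB Require Import structures.
From mathcomp Require Import all_boot all_order all_algebra.
From mathcomp Require Import all_classical all_reals all_analysis.
Set Implicit Arguments. Unset Strict Implicit. Unset Printing Implicit Defensive.
Import Order.TTheory GRing.Theory Num.Theory.
Local Open Scope ring_scope.
Local Open Scope classical_set_scope.

Definition convex_setR (R : realType) (n : nat) (X : set 'rV[R]_n) : Prop :=
  forall x y, X x -> X y -> forall t : R, 0 <= t -> t <= 1 ->
    X (t *: x + (1 - t) *: y).

Definition convex_onR (R : realType) (n : nat) (X : set 'rV[R]_n)
  (f : 'rV[R]_n -> R) : Prop :=
  forall x y, X x -> X y -> forall t : R, 0 <= t -> t <= 1 ->
    f (t *: x + (1 - t) *: y) <= t * f x + (1 - t) * f y.

(* Q is in the probability simplex over Sigma = 'I_d. *)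
Definition is_prob (R : realType) (d : nat) (Q : 'I_d -> R) : Prop :=
  (forall i, 0 <= Q i) /\ \sum_(i < d) Q i = 1.

Definition cost (R : realType) (n d : nat) (l : 'rV[R]_n -> 'I_d -> R)
  (x : 'rV[R]_n) (Q : 'I_d -> R) : R :=
  \sum_(i < d) l x i * Q i.

Definition varQ (R : realType) (n d : nat) (l : 'rV[R]_n -> 'I_d -> R)
  (x : 'rV[R]_n) (Q : 'I_d -> R) : R :=
  \sum_(i < d) Q i * (l x i - cost l x Q) ^+ 2.

From HB Require Import structures.
From mathcomp Require Import all_boot all_order all_algebra.
From mathcomp Require Import all_classical all_reals all_analysis.
From mathcomp Require Import ring lra.
Import Order.TTheory GRing.Theory Num.Theory.
Import numFieldNormedType.Exports.
Set Implicit Arguments. Unset Strict Implicit. Unset Printing Implicit Defensive.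
Local Open Scope ring_scope.
Local Open Scope classical_set_scope.

(* Write b = sqrt(2 alpha) and, for a loss vector a : Sigma -> R,
   f(a) = mean_Q a + b * std_Q a.  The proof exhibits f as a supremum of
   positive linear functionals: for every z there are nonnegative "support
   weights" w_z with  sum_i w_z(i) a(i) <= f(a)  for all a, with equality at
   a = z.  Explicitly w_z(i) = Q(i) (1 + b (z(i) - mean z) / std z); the upper
   bound is the weighted Cauchy-Schwarz inequality cov(a,z) <= std a * std z,
   and nonnegativity needs b |z(i) - mean z| <= std z, which follows from
   b^2 <= Q(i) since Q(i) (z(i) - mean z)^2 <= Var z.
   Any such f is monotone and convex (convex_of_support_weights), and the
   hypothesis on alpha gives b^2 <= min_i Q(i).  Composing with the convex
   maps x |-> l(x,i) yields the theorem. *)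

Lemma convex_of_support_weights (R : realFieldType) (d : nat)
    (f : ('I_d -> R) -> R) (w : ('I_d -> R) -> 'I_d -> R) :
  (forall z i, 0 <= w z i) ->
  (forall z, \sum_(i < d) w z i * z i = f z) ->
  (forall z a, \sum_(i < d) w z i * a i <= f a) ->
  forall (z u v : 'I_d -> R) (t : R), 0 <= t -> t <= 1 ->
  (forall i, z i <= t * u i + (1 - t) * v i) ->
  f z <= t * f u + (1 - t) * f v.
Proof.
move=> w_ge0 w_self w_le z u v t t0 t1 zle.
have split_sum : \sum_(i < d) w z i * (t * u i + (1 - t) * v i) =
    t * \sum_(i < d) w z i * u i + (1 - t) * \sum_(i < d) w z i * v i.
  by rewrite !mulr_sumr -big_split; apply: eq_bigr => i _ /=; ring.
rewrite -w_self; apply: (le_trans (ler_sum _ (fun i _ => ler_wpM2l (w_ge0 z i) (zle i)))).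
by rewrite split_sum lerD // ler_wpM2l ?subr_ge0.
Qed.

Section WeightedMoments.
Variables (R : realType) (d : nat) (Q : 'I_d -> R).
Hypothesis Q_ge0 : forall i, 0 <= Q i.
Hypothesis Q_sum1 : \sum_(i < d) Q i = 1.

(* These are cost and varQ, read on a single loss vector. *)
Definition mean (a : 'I_d -> R) : R := \sum_(i < d) a i * Q i.
Definition var (a : 'I_d -> R) : R := \sum_(i < d) Q i * (a i - mean a) ^+ 2.
Definition cov (a z : 'I_d -> R) : R := \sum_(i < d) Q i * a i * (z i - mean z).

Lemma var_ge0 a : 0 <= var a.
Proof. by apply: sumr_ge0 => i _; rewrite mulr_ge0 // sqr_ge0. Qed.

Lemma sum_centered a : \sum_(i < d) Q i * (a i - mean a) = 0.
Proof.
rewrite (eq_bigr (fun i => a i * Q i - mean a * Q i)); last by move=> i _; ring.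
by rewrite sumrB -mulr_sumr Q_sum1 mulr1 subrr.
Qed.

Lemma cov_centered a z :
  cov a z = \sum_(i < d) Q i * (a i - mean a) * (z i - mean z).
Proof.
rewrite /cov (eq_bigr (fun i => Q i * (a i - mean a) * (z i - mean z)
   + mean a * (Q i * (z i - mean z)))); last by move=> i _; ring.
by rewrite big_split /= -mulr_sumr sum_centered mulr0 addr0.
Qed.

Lemma cov_self z : cov z z = var z.
Proof. by rewrite cov_centered; apply: eq_bigr => i _; ring. Qed.

(* Cauchy-Schwarz for the Q-weighted inner product, via the discriminant
   of the nonnegative quadratic  L |-> sum_i Q i (p i - L q i)^2. *)
Lemma weighted_cauchy_schwarz (p q : 'I_d -> R) :
  0 < \sum_(i < d) Q i * q i ^+ 2 ->
  (\sum_(i < d) Q i * p i * q i) ^+ 2 <=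
  (\sum_(i < d) Q i * p i ^+ 2) * (\sum_(i < d) Q i * q i ^+ 2).
Proof.
set A := \sum_(i < d) Q i * p i ^+ 2; set B := \sum_(i < d) Q i * q i ^+ 2.
set C := \sum_(i < d) Q i * p i * q i.
move=> B_gt0; pose L := C / B.
have LB : L * B = C by rewrite /L mulfVK // gt_eqF.
have expand : \sum_(i < d) Q i * (p i - L * q i) ^+ 2 = A - 2 * L * C + L ^+ 2 * B.
  rewrite /A /B /C (eq_bigr (fun i => Q i * p i ^+ 2 - 2 * L * (Q i * p i * q i)
     + L ^+ 2 * (Q i * q i ^+ 2))); last by move=> i _; ring.
  by rewrite big_split /= sumrB -!mulr_sumr.
have : 0 <= A - 2 * L * C + L ^+ 2 * B.
  by rewrite -expand; apply: sumr_ge0 => i _; rewrite mulr_ge0 // sqr_ge0.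
have -> : C ^+ 2 = L * C * B by rewrite -LB; ring.
have -> : L ^+ 2 * B = L * C by rewrite -LB; ring.
by move=> discr; rewrite ler_pM2r //; lra.
Qed.

Lemma cov_le a z : 0 < var z -> cov a z <= Num.sqrt (var a) * Num.sqrt (var z).
Proof.
move=> var_gt0; rewrite cov_centered -sqrtrM ?var_ge0 //.
apply: (le_trans (ler_norm _)); rewrite -sqrtr_sqr ler_sqrt ?mulr_ge0 ?var_ge0 //.
exact: weighted_cauchy_schwarz.
Qed.

(* If b^2 <= Q i then one centred deviation, scaled by b, is controlled by
   the variance: this keeps the support weights nonnegative. *)
Lemma centered_sqr_le (b : R) z i : b ^+ 2 <= Q i ->
  (b * (z i - mean z)) ^+ 2 <= var z.
Proof.
move=> bQ; rewrite exprMn.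
apply: (le_trans (ler_wpM2r (sqr_ge0 _) bQ)).
rewrite /var (bigD1 i) //= lerDl.
by apply: sumr_ge0 => j _; rewrite mulr_ge0 // sqr_ge0.
Qed.

End WeightedMoments.

Section MeanStd.
Variables (R : realType) (d : nat) (Q : 'I_d -> R) (b : R).
Hypothesis Q_ge0 : forall i, 0 <= Q i.
Hypothesis Q_sum1 : \sum_(i < d) Q i = 1.
Hypothesis b_ge0 : 0 <= b.
Hypothesis b_sqr_le : forall i, b ^+ 2 <= Q i.

Definition mean_std (a : 'I_d -> R) : R := mean Q a + b * Num.sqrt (var Q a).

(* Weights tilting Q towards the large values of z; when Var z = 0 they
   reduce to Q itself, because division by 0 gives 0. *)
Definition support_weight (z : 'I_d -> R) (i : 'I_d) : R :=
  Q i * (1 + b * (z i - mean Q z) / Num.sqrt (var Q z)).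

(* Nonnegativity uses b |z i - mean z| <= std z. *)
Lemma support_weight_ge0 z i : 0 <= support_weight z i.
Proof.
rewrite /support_weight mulr_ge0 //.
have [var0|var_gt0] := eqVneq (var Q z) 0.
  by rewrite var0 sqrtr0 invr0 mulr0 addr0.
have s_gt0 : 0 < Num.sqrt (var Q z) by rewrite sqrtr_gt0 lt_def var_gt0 var_ge0.
rewrite -(ler_pM2r s_gt0) mul0r mulrDl mul1r mulfVK ?gt_eqF //.
have : (b * (z i - mean Q z)) ^+ 2 <= Num.sqrt (var Q z) ^+ 2.
  by rewrite sqr_sqrtr ?var_ge0 //; exact: centered_sqr_le.
move: s_gt0; nra.
Qed.

Lemma support_weight_sum z a : \sum_(i < d) support_weight z i * a i =
  mean Q a + b * (cov Q a z / Num.sqrt (var Q z)).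
Proof.
rewrite /cov mulr_suml mulr_sumr -[mean Q a]/(\sum_(i < d) a i * Q i) -big_split /=.
by apply: eq_bigr => i _; rewrite /support_weight; ring.
Qed.

(* The weights are tight at z, since cov z z / std z = std z. *)
Lemma support_weight_self z : \sum_(i < d) support_weight z i * z i = mean_std z.
Proof.
rewrite support_weight_sum cov_self // /mean_std.
have [var0|var_gt0] := eqVneq (var Q z) 0.
  by rewrite var0 sqrtr0 mul0r.
have s_neq0 : Num.sqrt (var Q z) != 0.
  by rewrite sqrtr_eq0 -ltNge lt_def var_gt0 var_ge0.
by rewrite -{1}(sqr_sqrtr (var_ge0 Q_ge0 z)) expr2 mulfK.
Qed.

(* The weights lie below the functional everywhere, by Cauchy-Schwarz. *)
Lemma support_weight_le z a : \sum_(i < d) support_weight z i * a i <= mean_std a.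
Proof.
rewrite support_weight_sum /mean_std lerD2l ler_wpM2l //.
have [var0|var_gt0] := eqVneq (var Q z) 0.
  by rewrite var0 sqrtr0 invr0 mulr0 sqrtr_ge0.
have vz_gt0 : 0 < var Q z by rewrite lt_def var_gt0 var_ge0.
by rewrite ler_pdivrMr ?sqrtr_gt0 // cov_le.
Qed.

End MeanStd.

(* The hypothesis of the theorem forces c^2 <= min_i Q i: both minima are at
   most 1 and the first is nonnegative, so c <= min_i Q i <= 1. *)
Lemma sqr_le_of_min_product_bound (R : realType) (d : nat) (Q : 'I_d -> R) (c : R) :
  (forall i, 0 <= Q i) -> 0 <= c ->
  c <= (\big[Order.min/1]_(i < d) Q i) *
       (\big[Order.min/1]_(i < d) Order.min (Q i) (1 - Q i)) ->
  forall i, c ^+ 2 <= Q i.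
Proof.
move=> Q_ge0 c_ge0 c_le i.
set s := \big[Order.min/1]_(i < d) Q i in c_le.
have s_le_Q : s <= Q i by exact: bigmin_le.
have s_le1 : s <= 1 by exact: bigmin_le_id.
have s_ge0 : 0 <= s by apply: le_bigmin.
have c_le_s : c <= s.
  apply: (le_trans c_le); rewrite -[leRHS]mulr1 ler_wpM2l //; exact: bigmin_le_id.
have c_le1 : c <= 1 := le_trans c_le_s s_le1.
by rewrite expr2; apply: (le_trans (ler_piMr c_ge0 c_le1)); apply: le_trans s_le_Q.
Qed.

Theorem mainTheorem15 (R : realType) (n d : nat) (hd : (2 <= d)%N)
  (X : set 'rV[R]_n) (l : 'rV[R]_n -> 'I_d -> R)
  (hXc : compact X) (hXconv : convex_setR X)
  (hl : forall i : 'I_d, convex_onR X (fun x => l x i))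
  (Q : 'I_d -> R) (hQ : is_prob Q) (alpha : R) (halpha : 0 < alpha)
  (hcond : Num.sqrt (2 * alpha) <=
     (\big[Order.min/1]_(i < d) Q i) *
     (\big[Order.min/1]_(i < d) Order.min (Q i) (1 - Q i))) :
  convex_onR X (fun x => cost l x Q + Num.sqrt (2 * alpha * varQ l x Q)).
Proof.
case: hQ => Q_ge0 Q_sum1.
set b := Num.sqrt (2 * alpha) in hcond *.
have b_ge0 : 0 <= b := sqrtr_ge0 _.
have b_sqr_le := sqr_le_of_min_product_bound Q_ge0 b_ge0 hcond.
have cost_eq x : cost l x Q + Num.sqrt (2 * alpha * varQ l x Q) = mean_std Q b (l x).
  by rewrite sqrtrM // mulr_ge0 // ltW.
move=> x y Xx Xy t t_ge0 t_le1; rewrite !cost_eq.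
apply: (convex_of_support_weights (support_weight_ge0 Q_ge0 b_sqr_le)
  (support_weight_self b Q_ge0 Q_sum1) (support_weight_le Q_ge0 Q_sum1 b_ge0)) => // i.
exact: hl.
Qed.
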